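(* Let $\mathcal{M}$ be an ergodic (not necessarily reversible) Markov chain on a finite state space. Then $$\Phi(\mathcal{M})\ \ge\ \frac{\frac12-\frac{1}{2e}}{\tau(\mathcal{M},\frac{1}{2e})}.$$
   Context: A (discrete-time) Markov chain on a finite state space $\Omega$ with transition matrix $P$ is ergodic if irreducible and aperiodic; it then has a unique stationary distribution $\pi>0$. Variation distance: $\|\theta_1-\theta_2\|=\frac12\sum_i|\theta_1(i)-\theta_2(i)|$. Mixing time: $\tau_x(\mathcal{M},\varepsilon)=\min\{t>0 \text{ integer}: \|P^{t'}(x,\cdot)-\pi\|\le\varepsilon \ \forall t'\ge t\}$, $\tau(\mathcal{M},\varepsilon)=\max_x\tau_x(\mathcal{M},\varepsilon)$. Conductance: for $S\subset\Omega$ with $0<\pi(S)<1$ and $\bar S=\Omega\setminus S$, $\Phi_S(\mathcal{M})=\dfrac{\sum_{i\in S}\sum_{j\in\bar S}\pi(i)P(i,j)+\sum_{i\in\bar S}\sum_{j\in S}\pi(i)P(i,j)}{2\pi(S)\pi(\bar S)}$, and $\Phi(\mathcal{M})=\min_S\Phi_S(\mathcal{M})$ over all such $S$. *)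

From HB Require Import structures.
From mathcomp Require Import all_boot all_order all_algebra.
From mathcomp Require Import boolp reals sequences exp.
Set Implicit Arguments. Unset Strict Implicit. Unset Printing Implicit Defensive.
Import Order.TTheory GRing.Theory Num.Theory.
Local Open Scope ring_scope.

Section Markov.
Variables (R : realType) (T : finType).

Definition stochastic (P : T -> T -> R) :=
  (forall i j, 0 <= P i j) /\ (forall i, \sum_(j : T) P i j = 1).

Fixpoint Ppow (P : T -> T -> R) (t : nat) : T -> T -> R :=
  match t with
  | 0 => fun i j => (i == j)%:R
  | t'.+1 => fun i j => \sum_(k : T) Ppow P t' i k * P k j
  end.

Definition irreducible (P : T -> T -> R) :=
  forall i j, exists t, 0 < Ppow P t i j.

(* the period of every state (gcd of its positive return times) is 1 *)
Definition aperiodic (P : T -> T -> R) :=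
  forall i (d : nat), (forall t : nat, (0 < t)%N -> 0 < Ppow P t i i -> (d %| t)%N) ->
    d = 1%N.

Definition ergodic (P : T -> T -> R) :=
  [/\ stochastic P, irreducible P & aperiodic P].

Definition stationary (P : T -> T -> R) (pi : T -> R) :=
  [/\ forall i, 0 <= pi i, \sum_(i : T) pi i = 1 &
      forall j, \sum_(i : T) pi i * P i j = pi j].

Definition var_dist (th1 th2 : T -> R) : R :=
  2^-1 * \sum_(i : T) `|th1 i - th2 i|.

Definition mixes_by (P : T -> T -> R) (pi : T -> R) (eps : R) (x : T) (t : nat) :=
  (0 < t)%N /\ forall t' : nat, (t <= t')%N -> var_dist (Ppow P t' x) pi <= eps.

(* tau_x(M, eps): the least such t (0 if none exists, which never happens
   for ergodic chains and eps > 0) *)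
Definition mixing_time_x (P : T -> T -> R) (pi : T -> R) (eps : R) (x : T) : nat :=
  match pselect (exists t, (fun t => `[< mixes_by P pi eps x t >]) t) with
  | left h => ex_minn h
  | right _ => 0%N
  end.

Definition mixing_time (P : T -> T -> R) (pi : T -> R) (eps : R) : nat :=
  \max_(x : T) mixing_time_x P pi eps x.

Definition prob (pi : T -> R) (S : {set T}) : R := \sum_(i in S) pi i.

Definition conductance_S (P : T -> T -> R) (pi : T -> R) (S : {set T}) : R :=
  (\sum_(i in S) \sum_(j in ~: S) pi i * P i j
   + \sum_(i in ~: S) \sum_(j in S) pi i * P i j)
  / (2 * prob pi S * prob pi (~: S)).

End Markov.

From HB Require Import structures.
From mathcomp Require Import all_boot all_order all_algebra.
From mathcomp Require Import boolp reals sequences exp.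
From mathcomp Require Import zify lra.
Import Order.TTheory GRing.Theory Num.Theory.
Set Implicit Arguments. Unset Strict Implicit. Unset Printing Implicit Defensive.

(* Fix S and run the chain from pi restricted to S.  Mass can leave S only
   across the boundary, at most Q(S, ~S) = sum_{i in S, j notin S} pi(i) P(i,j)
   per step, so after tau steps at most tau Q(S, ~S) of it lies outside S.
   On the other hand, after tau steps every starting point is eps-close to pi,
   so at least pi(S) (pi(~S) - eps) of it lies outside S.  Stationarity gives
   Q(~S, S) = Q(S, ~S), so the same holds with S and ~S exchanged, and the
   smaller of pi(S), pi(~S) yields (1/2 - eps) pi(S) pi(~S) <= tau Q(S, ~S).
   That the mixing time is attained at all is the convergence theorem, via
   primitivity of an ergodic transition matrix. *)

Lemma addn_closed_gcd1_eventually (A : pred nat) :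
  A 0 -> (forall a b, A a -> A b -> A (a + b)) ->
  (forall d, (forall t, 0 < t -> A t -> d %| t) -> d = 1) ->
  exists N, forall t, N <= t -> A t.
Proof.
move=> A0 AD gcd1.
have AM k x : A x -> A (k * x) by move=> Ax; elim: k => // k IH; rewrite mulSn AD.
have [a a_gt0 Aa] : exists2 a, 0 < a & A a.
  apply: contrapT => noA; suff : 0 = 1 :> nat by [].
  by apply: gcd1 => t t_gt0 At; case: noA; exists t.
pose gap d := (0 < d) && `[< exists q, A q /\ A (q + d) >].
have gapA t : 0 < t -> A t -> gap t.
  by move=> t_gt0 At; rewrite /gap t_gt0; apply/asboolP; exists t; rewrite AD.
have [d /andP [d_gt0 /asboolP [q [Aq Aqd]]] min_d] :=
  ex_minnP (ex_intro _ a (gapA a a_gt0 Aa)).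
(* a positive remainder r := t %% d would be a smaller gap, between
   t %/ d * (q + d) and t %/ d * (q + d) + r = t + t %/ d * q *)
have d1 : d = 1.
  apply: gcd1 => t t_gt0 At; rewrite /dvdn; apply/eqP.
  case: (posnP (t %% d)) => // r_gt0; have := ltn_pmod t d_gt0.
  rewrite ltnNge min_d // /gap r_gt0; apply/asboolP.
  exists (t %/ d * (q + d)); split; first exact: AM.
  have -> : t %/ d * (q + d) + t %% d = t + t %/ d * q.
    by rewrite {3}(divn_eq t d); lia.
  by rewrite AD ?AM.
(* with q, q + 1 in A, write t >= q ^ 2 as (k - r) q + r (q + 1), where
   k := t %/ q >= q > r := t %% q *)
exists (q * q) => t t_ge; rewrite d1 in Aqd.
have -> : t = (t %/ q - t %% q) * q + t %% q * (q + 1).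
  have := divn_eq t q; case: (posnP q) => [-> | q_gt0]; first by rewrite divn0 modn0; lia.
  have := ltn_pmod t q_gt0; nia.
by rewrite AD ?AM.
Qed.

Local Open Scope ring_scope.

Lemma ler_term_sum (R : numDomainType) (I : finType) (F : I -> R) i :
  (forall j, 0 <= F j) -> F i <= \sum_j F j.
Proof. by move=> F_ge0; rewrite (bigD1 i) //= lerDl sumr_ge0. Qed.

Lemma sumr_mul_delta (R : pzSemiRingType) (I : finType) (F : I -> R) i :
  \sum_j F j * (j == i)%:R = F i.
Proof. by under eq_bigr do rewrite mulr_natr mulrb; rewrite -big_mkcond big_pred1_eq. Qed.

Section StochasticMatrix.
Variables (R : realType) (T : finType) (P : T -> T -> R).

Lemma PpowD a b i j : Ppow P (a + b) i j = \sum_k Ppow P a i k * Ppow P b k j.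
Proof.
elim: b j => [|b IH] j; first by rewrite addn0 sumr_mul_delta.
rewrite addnS /=; under eq_bigr do rewrite IH mulr_suml.
rewrite exchange_big; apply: eq_bigr => k _.
by rewrite mulr_sumr; apply: eq_bigr => l _; rewrite mulrA.
Qed.

Lemma Ppow_stationary pi t j : stationary P pi -> \sum_i pi i * Ppow P t i j = pi j.
Proof.
case=> _ _ pi_inv; elim: t j => [|t IH] j /=; first by rewrite sumr_mul_delta.
under eq_bigr do rewrite mulr_sumr.
rewrite exchange_big /= -[RHS]pi_inv; apply: eq_bigr => k _.
by rewrite -IH mulr_suml; apply: eq_bigr => i _; rewrite mulrA.
Qed.

Hypothesis P_stoch : stochastic P.

Lemma Ppow_ge0 t i j : 0 <= Ppow P t i j.
Proof.
elim: t i j => [|t IH] i j /=; first exact: ler0n.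
by apply: sumr_ge0 => k _; apply: mulr_ge0 => //; case: P_stoch.
Qed.

Lemma Ppow_sum1 t i : \sum_j Ppow P t i j = 1.
Proof.
elim: t i => [|t IH] i /=.
  by under eq_bigr do rewrite eq_sym -[_%:R]mul1r; rewrite sumr_mul_delta.
rewrite exchange_big /= -[RHS](IH i); apply: eq_bigr => k _.
by rewrite -mulr_sumr; case: P_stoch => _ ->; rewrite mulr1.
Qed.

Lemma Ppow_mul_le a b i k j : Ppow P a i k * Ppow P b k j <= Ppow P (a + b) i j.
Proof.
rewrite PpowD; apply: (ler_term_sum (F := fun k => _ * _)) => l.
by apply: mulr_ge0; apply: Ppow_ge0.
Qed.

End StochasticMatrix.

Section VariationDistance.
Variables (R : realType) (T : finType).
Implicit Types (th pi : T -> R) (A : {set T}).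

Lemma sum_setC_split (F : T -> R) A :
  \sum_j F j = \sum_(j in A) F j + \sum_(j in ~: A) F j.
Proof.
by rewrite (bigID (mem A)) /=; congr (_ + _); apply: eq_bigl => j; rewrite in_setC.
Qed.

Lemma var_dist_le1 th pi :
  (forall i, 0 <= th i) -> (forall i, 0 <= pi i) ->
  \sum_i th i = 1 -> \sum_i pi i = 1 -> var_dist th pi <= 1.
Proof.
move=> th_ge0 pi_ge0 th1 pi1; rewrite /var_dist.
have : \sum_i `|th i - pi i| <= \sum_i (th i + pi i).
  apply: ler_sum => i _; apply: le_trans (ler_normB _ _) _.
  by rewrite !ger0_norm.
rewrite big_split /= th1 pi1; lra.
Qed.

Lemma prob_ge_sub_var_dist th pi A : \sum_i th i = \sum_i pi i ->
  prob pi A - var_dist th pi <= prob th A.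
Proof.
rewrite /var_dist /prob !(sum_setC_split _ A) => sum_eq.
have dA : \sum_(j in A) pi j - \sum_(j in A) th j <= \sum_(j in A) `|th j - pi j|.
  by rewrite -sumrB; apply: ler_sum => j _; rewrite distrC ler_norm.
have dAC : \sum_(j in ~: A) th j - \sum_(j in ~: A) pi j <= \sum_(j in ~: A) `|th j - pi j|.
  by rewrite -sumrB; apply: ler_sum => j _; exact: ler_norm.
lra.
Qed.

End VariationDistance.

Lemma uniform_lower_bound (R : realFieldType) (I : finType) (F : I -> R) :
  (forall i, 0 < F i) -> exists2 d, 0 < d & forall i, d <= F i.
Proof.
move=> F_gt0; have invF_ge0 j : 0 <= (F j)^-1 by rewrite invr_ge0 ltW.
have s_ge0 : 0 <= \sum_j (F j)^-1 by apply: sumr_ge0.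
exists (1 + \sum_j (F j)^-1)^-1 => [|i]; first by rewrite invr_gt0; lra.
rewrite -[F i]invrK lef_pV2 ?posrE ?invr_gt0 //; last by lra.
by have := ler_term_sum i invF_ge0; lra.
Qed.

Lemma expr_onem_small (R : realType) (s eps : R) :
  0 < s <= 1 -> 0 < eps -> exists k, (1 - s) ^+ k <= eps.
Proof.
case/andP=> s_gt0 s_le1 eps_gt0.
have bernoulli k : (1 - s) ^+ k * (1 + k%:R * s) <= 1.
  elim: k => [|k IH]; first by rewrite expr0 mul0r addr0 mulr1.
  apply: le_trans IH; rewrite exprSr -mulrA ler_wpM2l ?exprn_ge0 ?subr_ge0 //.
  by have : 0 <= k%:R :> R by []; nra.
pose k := Num.Def.archi_bound ((s * eps)^-1); exists k.
have : 1 < k%:R * (s * eps).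
  by rewrite -ltr_pdivrMr ?mulr_gt0 // mul1r archi_boundP // invr_ge0 ltW ?mulr_gt0.
have := bernoulli k; have : 0 <= (1 - s) ^+ k by rewrite exprn_ge0 ?subr_ge0.
nra.
Qed.

Lemma l1_contraction (R : realType) (T : finType) (w : T -> R) (Q : T -> T -> R) d :
  \sum_k w k = 0 -> (forall k j, d <= Q k j) -> (forall k, \sum_j Q k j = 1) ->
  \sum_j `|\sum_k w k * Q k j| <= (1 - #|T|%:R * d) * \sum_k `|w k|.
Proof.
move=> w0 Q_ge Q1.
(* since w sums to 0, d may be subtracted from every entry of Q *)
have shift j : \sum_k w k * Q k j = \sum_k w k * (Q k j - d).
  under [RHS]eq_bigr do rewrite mulrBr.
  by rewrite sumrB -mulr_suml w0 mul0r subr0.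
apply: (@le_trans _ _ (\sum_j \sum_k `|w k| * (Q k j - d))).
  apply: ler_sum => j _; rewrite shift; apply: le_trans (ler_norm_sum _ _ _) _.
  apply: ler_sum => k _; rewrite normrM [`|Q k j - d|]ger0_norm // subr_ge0.
  exact: Q_ge.
rewrite exchange_big /= mulr_sumr; apply: ler_sum => k _.
by rewrite -mulr_sumr sumrB Q1 sumr_const mulr_natl mulrC.
Qed.

Section Convergence.
Variables (R : realType) (T : finType) (P : T -> T -> R) (pi : T -> R).
Hypotheses (P_erg : ergodic P) (pi_stat : stationary P pi).

Let P_stoch : stochastic P. Proof. by case: P_erg. Qed.

(* each return-time set is eventually everything by aperiodicity; then
   combine with an i -> j path of bounded length *)
Lemma ergodic_primitive : exists m, forall i j, 0 < Ppow P m i j.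
Proof.
case: P_erg => _ irr aper.
have return_eventually i : exists N, forall t, (N <= t)%N -> 0 < Ppow P t i i.
  apply: (addn_closed_gcd1_eventually (A := fun t => 0 < Ppow P t i i)) => /=.
  - by rewrite eqxx ltr01.
  - move=> a b Pa Pb; apply: lt_le_trans (Ppow_mul_le P_stoch a b i i i).
    exact: mulr_gt0.
  - exact: aper.
have [N N_ret] := choice return_eventually.
have [r r_path] := choice (fun p : T * T => irr p.1 p.2).
exists (\max_i N i + \max_p r p)%N => i j.
have r_le : (r (i, j) <= \max_p r p)%N by apply: (leq_bigmax (i, j)).
have N_le : (N i <= \max_i N i)%N by apply: (leq_bigmax i).
have -> : (\max_i N i + \max_p r p = (\max_i N i + \max_p r p - r (i, j)) + r (i, j))%N.
  by rewrite subnK //; lia.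
apply: lt_le_trans (Ppow_mul_le P_stoch _ _ i i j); apply: mulr_gt0.
  by apply: N_ret; lia.
exact: (r_path (i, j)).
Qed.

Lemma var_dist_PpowD_le x t s e : (forall k j, e <= Ppow P s k j) ->
  var_dist (Ppow P (t + s) x) pi <= (1 - #|T|%:R * e) * var_dist (Ppow P t x) pi.
Proof.
move=> Ps_ge; case: pi_stat => _ pi1 _.
have step j : Ppow P (t + s) x j - pi j = \sum_k (Ppow P t x k - pi k) * Ppow P s k j.
  rewrite PpowD -(Ppow_stationary s j pi_stat) -sumrB.
  by apply: eq_bigr => k _; rewrite mulrBl.
rewrite /var_dist mulrCA ler_wpM2l ?invr_ge0 //.
under eq_bigr do rewrite step.
apply: l1_contraction => //; last exact: Ppow_sum1.
by rewrite sumrB Ppow_sum1 // pi1 subrr.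
Qed.

Lemma var_dist_Ppow_eventually_le eps x : 0 < eps ->
  exists N, forall t, (N <= t)%N -> var_dist (Ppow P t x) pi <= eps.
Proof.
move=> eps_gt0; case: (pi_stat) => pi_ge0 pi1 _.
have [m Pm_gt0] := ergodic_primitive.
have [d d_gt0 Pm_ge] := uniform_lower_bound (fun p : T * T => Pm_gt0 p.1 p.2).
have {}Pm_ge k j : d <= Ppow P m k j by exact: (Pm_ge (k, j)).
pose s := #|T|%:R * d.
have s_gt0 : 0 < s by rewrite mulr_gt0 // ltr0n; apply/card_gt0P; exists x.
have s_le1 : s <= 1.
  rewrite -(Ppow_sum1 P_stoch m x) /s mulr_natl -sumr_const.
  by apply: ler_sum => j _.
have [k small] : exists k, (1 - s) ^+ k <= eps.
  by apply: expr_onem_small => //; rewrite s_gt0.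
have geometric n : var_dist (Ppow P (n * m) x) pi <= (1 - s) ^+ n.
  elim: n => [|n IH].
    by apply: var_dist_le1 (Ppow_ge0 P_stoch 0 x) _ (Ppow_sum1 P_stoch 0 x) _.
  rewrite mulSnr exprS; apply: le_trans (var_dist_PpowD_le _ _ Pm_ge) _.
  by apply: ler_wpM2l; rewrite ?subr_ge0.
exists (k * m)%N => t le_t; rewrite -(subnKC le_t).
apply: le_trans (var_dist_PpowD_le _ _ (Ppow_ge0 P_stoch _)) _.
by rewrite mulr0 subr0 mul1r; exact: le_trans (geometric k) small.
Qed.

Lemma mixing_time_xP eps x t : 0 < eps -> (mixing_time_x P pi eps x <= t)%N ->
  var_dist (Ppow P t x) pi <= eps.
Proof.
move=> eps_gt0; rewrite /mixing_time_x; case: pselect => [ex | nex].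
  by case: (ex_minnP ex) => n /asboolP [_ mix] _; exact: mix.
have [N mixN] := var_dist_Ppow_eventually_le x eps_gt0.
by case: nex; exists N.+1; apply/asboolP; split => // t' le_t'; apply: mixN; lia.
Qed.

End Convergence.

Section Conductance.
Variables (R : realType) (T : finType) (P : T -> T -> R) (pi : T -> R).
Hypotheses (P_stoch : stochastic P) (pi_stat : stationary P pi).
Implicit Types (S : {set T}).

Definition boundary_flow S := \sum_(i in S) \sum_(j in ~: S) pi i * P i j.

Lemma boundary_flow_ge0 S : 0 <= boundary_flow S.
Proof.
apply: sumr_ge0 => i _; apply: sumr_ge0 => j _.
by apply: mulr_ge0; [case: pi_stat | case: P_stoch].
Qed.

(* both flows equal pi(S) minus the flow from S to S: the first by summing
   the rows of P, the second by stationarity *)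
Lemma boundary_flow_setC S : boundary_flow (~: S) = boundary_flow S.
Proof.
case: pi_stat => _ _ pi_inv; rewrite /boundary_flow setCK.
have out : \sum_(i in S) pi i = \sum_(i in S) \sum_(j in S) pi i * P i j
    + \sum_(i in S) \sum_(j in ~: S) pi i * P i j.
  rewrite -big_split /=; apply: eq_bigr => i _.
  by rewrite -sum_setC_split -mulr_sumr; case: P_stoch => _ ->; rewrite mulr1.
have inn : \sum_(j in S) pi j = \sum_(i in S) \sum_(j in S) pi i * P i j
    + \sum_(i in ~: S) \sum_(j in S) pi i * P i j.
  rewrite (exchange_big _ _ _ (mem S)) (exchange_big _ _ _ (mem (~: S))) /=.
  by rewrite -big_split /=; apply: eq_bigr => j _; rewrite -sum_setC_split pi_inv.
lra.
Qed.

Lemma conductance_SE S : conductance_S P pi S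
  = (boundary_flow S + boundary_flow S) / (2 * prob pi S * prob pi (~: S)).
Proof. by rewrite -{2}(boundary_flow_setC S) /boundary_flow setCK. Qed.

Definition mass_from S t j := \sum_(x in S) pi x * Ppow P t x j.

Lemma mass_from_ge0 S t j : 0 <= mass_from S t j.
Proof.
apply: sumr_ge0 => x _; apply: mulr_ge0; [by case: pi_stat | exact: Ppow_ge0].
Qed.

Lemma mass_fromS S t j : mass_from S t.+1 j = \sum_k mass_from S t k * P k j.
Proof.
rewrite /mass_from /=; under eq_bigr do rewrite mulr_sumr.
rewrite exchange_big /=; apply: eq_bigr => k _; rewrite mulr_suml.
by apply: eq_bigr => x _; rewrite mulrA.
Qed.

Lemma mass_from0_setC S j : j \in ~: S -> mass_from S 0 j = 0.
Proof.
rewrite in_setC => jNS; apply: big1 => x xS /=.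
by rewrite (negPf (memPn jNS x xS)) mulr0.
Qed.

Lemma mass_from_le S t j : mass_from S t j <= pi j.
Proof.
case: pi_stat => pi_ge0 _ pi_inv; elim: t j => [|t IH] j.
  case: (boolP (j \in S)) => jS; last by rewrite mass_from0_setC ?in_setC.
  rewrite /mass_from (bigD1 j) //= eqxx mulr1 big1 ?addr0 // => x /andP [_ /negbTE ->].
  by rewrite mulr0.
rewrite mass_fromS -pi_inv; apply: ler_sum => k _.
by apply: ler_wpM2r; [case: P_stoch | exact: IH].
Qed.

(* mass outside S at most stays outside, while the mass at k in S, which is
   at most pi k, leaves S with probability P(k, ~S) *)
Lemma mass_from_setC_le S t : \sum_(j in ~: S) mass_from S t j <= t%:R * boundary_flow S.
Proof.
case: P_stoch => P_ge0 P1; elim: t => [|t IH].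
  by rewrite mul0r big1 // => j; exact: mass_from0_setC.
have step : \sum_(j in ~: S) mass_from S t.+1 j
    = \sum_k mass_from S t k * \sum_(j in ~: S) P k j.
  under eq_bigr do rewrite mass_fromS.
  by rewrite exchange_big /=; apply: eq_bigr => k _; rewrite mulr_sumr.
rewrite step (sum_setC_split _ S) -natr1 mulrDl mul1r addrC lerD //.
  apply: le_trans IH; apply: ler_sum => k _.
  rewrite ler_piMr ?mass_from_ge0 // -(P1 k) (sum_setC_split _ S) lerDr.
  exact: sumr_ge0.
apply: ler_sum => k _; rewrite -mulr_sumr ler_wpM2r ?mass_from_le //.
exact: sumr_ge0.
Qed.

Lemma mixed_escape_le S t eps :
  (forall x, x \in S -> var_dist (Ppow P t x) pi <= eps) ->
  prob pi S * (prob pi (~: S) - eps) <= t%:R * boundary_flow S.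
Proof.
case: (pi_stat) => pi_ge0 pi1 _ mixed.
apply: le_trans (mass_from_setC_le S t); rewrite /prob mulr_suml /mass_from exchange_big /=.
apply: ler_sum => x xS; rewrite -mulr_sumr ler_wpM2l //.
have := @prob_ge_sub_var_dist _ _ (Ppow P t x) pi (~: S).
rewrite pi1 Ppow_sum1 // => /(_ erefl); apply: le_trans.
by rewrite /prob lerD2l lerN2 mixed.
Qed.

End Conductance.

Lemma conductance_bound_arith (R : realFieldType) (p q f eps tau : R) :
  0 < p -> 0 < q -> p + q = 1 -> 0 <= eps <= 2^-1 -> 0 <= f -> 0 <= tau ->
  p * (q - eps) <= tau * f -> q * (p - eps) <= tau * f ->
  (2^-1 - eps) / tau <= (f + f) / (2 * p * q).
Proof.
move=> p_gt0 q_gt0 pq1 /andP [eps_ge0 eps_le] f_ge0 tau_ge0 escS escSC.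
have pq_gt0 : 0 < 2 * p * q by rewrite !mulr_gt0.
have [-> | tau_gt0] := eqVneq tau 0.
  by rewrite invr0 mulr0 divr_ge0 ?addr_ge0 // ltW.
have {}tau_gt0 : 0 < tau by rewrite lt_def tau_gt0.
rewrite ler_pdivrMr // mulrAC ler_pdivlMr //.
have [p_le | p_gt] := lerP p 2^-1.
  have : 0 <= p * ((2^-1 + eps) * q - eps) by apply: mulr_ge0; nra.
  nra.
have : 0 <= q * ((2^-1 + eps) * p - eps) by apply: mulr_ge0; nra.
nra.
Qed.

Theorem theorem17 (R : realType) (T : finType) (P : T -> T -> R) (pi : T -> R) :
  ergodic P -> stationary P pi ->
  forall S : {set T}, 0 < prob pi S < 1 ->
    (2^-1 - (2 * expR 1)^-1) / (mixing_time P pi (2 * expR 1)^-1)%:R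
      <= conductance_S P pi S.
Proof.
move=> P_erg pi_stat S /andP [pS_gt0 pS_lt1].
have P_stoch : stochastic P by case: P_erg.
have eps_gt0 : 0 < (2 * expR 1)^-1 :> R by rewrite invr_gt0 mulr_gt0 ?expR_gt0.
have eps_le : (2 * expR 1)^-1 <= 2^-1 :> R.
  by rewrite lef_pV2 ?posrE ?mulr_gt0 ?expR_gt0 //; have := expR_ge1Dx (1 : R); lra.
set eps := (2 * expR 1)^-1 in eps_gt0 eps_le *; set tau := mixing_time P pi eps.
have mixed x : var_dist (Ppow P tau x) pi <= eps.
  by apply: mixing_time_xP => //; exact: (leq_bigmax x).
have pSC : prob pi S + prob pi (~: S) = 1.
  by rewrite /prob -sum_setC_split; case: pi_stat.
have escS := mixed_escape_le P_stoch pi_stat (S := S) (fun x _ => mixed x).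
have := mixed_escape_le P_stoch pi_stat (S := ~: S) (fun x _ => mixed x).
rewrite setCK boundary_flow_setC // => escSC.
rewrite conductance_SE //; apply: conductance_bound_arith => //; try lra.
exact: boundary_flow_ge0.
Qed.
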